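(* The center of the formal Burau group $\mathcal{B}$ is generated by $\beta(\Delta)$, where $\Delta=(\sigma_1\sigma_2\sigma_1)^2$. In particular, $Z(\mathcal{B})=Z(\beta(B_3))$.
   Context: Let $B_3$ be the braid group with standard generators $\sigma_1,\sigma_2$ and $\beta$ the Burau representation $\beta(\sigma_1)=\begin{pmatrix}1-t&t&0\\1&0&0\\0&0&1\end{pmatrix}$, $\beta(\sigma_2)=\begin{pmatrix}1&0&0\\0&1-t&t\\0&1&0\end{pmatrix}$. For a matrix $A$ with Laurent polynomial entries, $\overline{A}$ denotes substitution $t\mapsto t^{-1}$ in every entry. Let $J_3=\begin{pmatrix}1&-t^{-1}&-t^{-1}\\-t&1&-t^{-1}\\-t&-t&1\end{pmatrix}$, $v=(t,t^2,t^3)$ (a row vector), $\vec{1}=(1,1,1)^T$, and the formal Burau group $\mathcal{B}=\{A\in\mathrm{GL}(3,\mathbb{Z}[t,t^{-1}]) : vA=v,\ A\vec 1=\vec 1,\ \overline{A}J_3A^T=J_3\}$. *)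

From HB Require Import structures.
From mathcomp Require Import all_boot all_order all_algebra.
From mathcomp Require Import fraction.
From mathcomp Require Import generic_quotient.
Set Implicit Arguments. Unset Strict Implicit. Unset Printing Implicit Defensive.
Import Order.TTheory GRing.Theory Num.Theory.
Local Open Scope ring_scope.

(* Z[t,t^-1] is realised inside its fraction field K = Frac(Z[t]). *)
Definition K := {fraction {poly int}}.
Definition tf (p : {poly int}) : K := FracField.tofrac p.
Definition T : K := tf 'X.

Definition laurent (x : K) : Prop :=
  exists (p : {poly int}) (n : nat), x = tf p / T ^+ n.

Definition subst_inv (p : {poly int}) : K := (map_poly (fun c : int => c%:~R : K) p).[T^-1].
Definition bar (x : K) : K :=
  subst_inv (\n_(repr x)) / subst_inv (\d_(repr x)).
Definition barmx (A : 'M[K]_3) : 'M[K]_3 := map_mx bar A.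

Definition GL3_laurent (A : 'M[K]_3) : Prop :=
  (forall i j, laurent (A i j)) /\ A \in unitmx /\
  (forall i j, laurent (invmx A i j)).

Definition s1 : 'M[K]_3 :=
  \matrix_(i < 3, j < 3)
   nth 0 (nth [::] [:: [:: 1 - T; T; 0]; [:: 1; 0; 0]; [:: 0; 0; 1]] i) j.
Definition s2 : 'M[K]_3 :=
  \matrix_(i < 3, j < 3)
   nth 0 (nth [::] [:: [:: 1; 0; 0]; [:: 0; 1 - T; T]; [:: 0; 1; 0]] i) j.
Definition J3 : 'M[K]_3 :=
  \matrix_(i < 3, j < 3)
   nth 0 (nth [::] [:: [:: 1; - T^-1; - T^-1]; [:: - T; 1; - T^-1]; [:: - T; - T; 1]] i) j.
Definition vv : 'rV[K]_3 := \row_(j < 3) [:: T; T ^+ 2; T ^+ 3]`_j.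
Definition one3 : 'cV[K]_3 := const_mx 1.

Definition formal_burau (A : 'M[K]_3) : Prop :=
  GL3_laurent A /\ vv *m A = vv /\ A *m one3 = one3 /\
  barmx A *m J3 *m A^T = J3.

Definition betaDelta : 'M[K]_3 := (s1 *m s2 *m s1) *m (s1 *m s2 *m s1).

Inductive burau_image : 'M[K]_3 -> Prop :=
  | bi_one : burau_image 1%:M
  | bi_s1 A : burau_image A -> burau_image (A *m s1)
  | bi_s2 A : burau_image A -> burau_image (A *m s2)
  | bi_s1i A : burau_image A -> burau_image (A *m invmx s1)
  | bi_s2i A : burau_image A -> burau_image (A *m invmx s2).

Definition center_of (G : 'M[K]_3 -> Prop) (A : 'M[K]_3) : Prop :=
  G A /\ forall B, G B -> A *m B = B *m A.

Definition zpow (D : 'M[K]_3) (k : int) : 'M[K]_3 :=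
  match k with
  | Posz n => D ^+ n
  | Negz n => (invmx D) ^+ n.+1
  end.

(* A matrix commuting with beta(s1), beta(s2) and fixing the column 1
   is u I + ((1 - u) / Phi3(t)) R, where Phi3 = 1 + t + t^2 and R = 1 (1, t, t^2).
   Since R^2 = Phi3(t) R, this is multiplicative in u, and beta(Delta) is the matrix
   of u = t^3.  These matrices commute with everything fixing v and 1, because
   R = t^-1 1 v.  Conversely, for a central element of the formal Burau group, the
   entries of A and A^-1 being Laurent make u a unit +-t^a of Z[t, t^-1], and
   (1 - u) / Phi3 being Laurent forces u = t^(3k): evaluate at t = 2 in F_7, where 2
   is a root of Phi3, i.e. a primitive cube root of unity. *)

From HB Require Import structures.
From mathcomp Require Import all_boot all_order all_algebra.
From mathcomp Require Import fraction generic_quotient ring zify.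
Set Implicit Arguments. Unset Strict Implicit. Unset Printing Implicit Defensive.
Local Open Scope ring_scope.
Import GRing.Theory.

(** * Burau matrices over a field *)

Definition i0 : 'I_3 := @Ordinal 3 0 isT.
Definition i1 : 'I_3 := @Ordinal 3 1 isT.
Definition i2 : 'I_3 := @Ordinal 3 2 isT.

Lemma mulmx3E (R : pzSemiRingType) m n (A : 'M[R]_(m, 3)) (B : 'M[R]_(3, n)) i j :
  (A *m B) i j = A i i0 * B i0 j + A i i1 * B i1 j + A i i2 * B i2 j.
Proof.
rewrite mxE !big_ord_recl big_ord0 addr0 addrA.
by congr (A i _ * B _ j + A i _ * B _ j + A i _ * B _ j); apply: val_inj.
Qed.

Lemma ord3P (i : 'I_3) : [\/ i = i0, i = i1 | i = i2].
Proof.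
by case: i => -[|[|[|//]]] lti; [constructor 1 | constructor 2 | constructor 3];
  apply: val_inj.
Qed.

Lemma mulmx1_invmx (R : comUnitRingType) n (A B : 'M[R]_n) : A *m B = 1%:M -> invmx A = B.
Proof. by move=> AB1; have [uA _] := mulmx1_unit AB1; rewrite -[LHS]mulmx1 -AB1 mulKmx. Qed.

Lemma invmxM (R : comUnitRingType) n (A B : 'M[R]_n) : A \in unitmx -> B \in unitmx ->
  invmx (A *m B) = invmx B *m invmx A.
Proof.
move=> uA uB; apply: mulmx1_invmx.
by rewrite mulmxA -(mulmxA A) (mulmxV uB) mulmx1 (mulmxV uA).
Qed.

Lemma invmx_comm (R : comUnitRingType) n (A B : 'M[R]_n) : A \in unitmx ->
  A *m B = B *m A -> invmx A *m B = B *m invmx A.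
Proof.
move=> uA AB; apply: (canRL (mulmxK uA)).
by rewrite -mulmxA -AB mulmxA (mulVmx uA) mul1mx.
Qed.

Ltac mx3_entries := apply/matrixP; let i := fresh "i" in let j := fresh "j" in
  move=> i j; try case: (ord3P i) => ->; try case: (ord3P j) => ->;
  rewrite ?mulmx3E !mxE ?big_ord1 ?mxE /=.

Definition phi3 (R : pzSemiRingType) (x : R) := 1 + x + x ^+ 2.

Section BurauMatrices.

Variables (F : fieldType) (t : F).

Definition mx3 (rows : seq (seq F)) : 'M[F]_3 :=
  \matrix_(i < 3, j < 3) nth 0 (nth [::] rows i) j.

Definition sigma1 := mx3 [:: [:: 1 - t; t; 0]; [:: 1; 0; 0]; [:: 0; 0; 1]].
Definition sigma2 := mx3 [:: [:: 1; 0; 0]; [:: 0; 1 - t; t]; [:: 0; 1; 0]].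
Definition sigma1_inv := mx3 [:: [:: 0; 1; 0]; [:: t^-1; 1 - t^-1; 0]; [:: 0; 0; 1]].
Definition sigma2_inv := mx3 [:: [:: 1; 0; 0]; [:: 0; 0; 1]; [:: 0; t^-1; 1 - t^-1]].
Definition burauJ :=
  mx3 [:: [:: 1; - t^-1; - t^-1]; [:: - t; 1; - t^-1]; [:: - t; - t; 1]].
Definition burau_v : 'rV[F]_3 := \row_(j < 3) [:: t; t ^+ 2; t ^+ 3]`_j.
Definition ones3 : 'cV[F]_3 := const_mx 1.

Definition rank1mx : 'M[F]_3 := \matrix_(i < 3, j < 3) t ^+ j.
Definition central_mx u := u%:M + ((1 - u) / phi3 t) *: rank1mx.

Lemma mul_sigma1_inv : t != 0 -> sigma1 *m sigma1_inv = 1%:M.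
Proof. by move=> t0; mx3_entries; field. Qed.
Lemma mul_sigma2_inv : t != 0 -> sigma2 *m sigma2_inv = 1%:M.
Proof. by move=> t0; mx3_entries; field. Qed.

Lemma burau_v_sigma1 : burau_v *m sigma1 = burau_v.
Proof. by mx3_entries; ring. Qed.
Lemma burau_v_sigma2 : burau_v *m sigma2 = burau_v.
Proof. by mx3_entries; ring. Qed.
Lemma sigma1_ones : sigma1 *m ones3 = ones3.
Proof. by mx3_entries; ring. Qed.
Lemma sigma2_ones : sigma2 *m ones3 = ones3.
Proof. by mx3_entries; ring. Qed.

Lemma rank1mxE : t != 0 -> rank1mx = t^-1 *: (ones3 *m burau_v).
Proof. by move=> t0; mx3_entries; field. Qed.

Lemma rank1mx_sq : rank1mx *m rank1mx = phi3 t *: rank1mx.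
Proof. by mx3_entries; rewrite /phi3; ring. Qed.

Hypothesis phi3_neq0 : phi3 t != 0.

Lemma central_mxM u w : central_mx u *m central_mx w = central_mx (u * w).
Proof.
rewrite /central_mx mulmxDl !mulmxDr -!scalemxAl -!scalemxAr rank1mx_sq.
rewrite !mul_scalar_mx mul_mx_scalar scale_scalar_mx !scalerA -!addrA; congr (_ + _).
by rewrite -!scalerDl; congr (_ *: _); field.
Qed.

Lemma central_mx1 : central_mx 1 = 1%:M.
Proof. by rewrite /central_mx subrr mul0r scale0r addr0. Qed.

Lemma central_mxX u n : central_mx u ^+ n = central_mx (u ^+ n).
Proof.
elim: n => [|n IHn]; first by rewrite !expr0 central_mx1.
by rewrite exprS IHn [_ * _]central_mxM -exprS.
Qed.

Lemma central_mx_inv u : u != 0 -> invmx (central_mx u) = central_mx u^-1.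
Proof. by move=> u0; apply: mulmx1_invmx; rewrite central_mxM mulfV ?central_mx1. Qed.

Lemma central_mx_coef u :
  central_mx u i0 i0 - central_mx u i1 i0 = u /\ central_mx u i1 i0 = (1 - u) / phi3 t.
Proof. by rewrite !mxE /=; split; ring. Qed.

Lemma central_mx_inj u w : central_mx u = central_mx w -> u = w.
Proof. by move=> euw; rewrite -(proj1 (central_mx_coef u)) euw; case: (central_mx_coef w). Qed.

Lemma sigma_centralizer A :
  A *m sigma1 = sigma1 *m A -> A *m sigma2 = sigma2 *m A -> A *m ones3 = ones3 ->
  A = central_mx (A i0 i0 - A i1 i0).
Proof.
move=> /matrixP c1 /matrixP c2 /matrixP c3.
move: (c1 i1 i1) (c1 i1 i2) (c1 i2 i0) (c1 i1 i0) (c2 i2 i0) (c2 i0 i1) (c2 i2 i1) (c3 i0 0).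
rewrite !mulmx3E !mxE /= !(mulr0, mul0r, mulr1, mul1r, addr0, add0r).
set x := A i1 i0 => /esym e01 e12 e21 e11 e20 e02 e22 row.
have solve (a b c : F) : a + b = c -> b = c - a by move/(canRL (addKr a)); rewrite addrC.
move/solve: e21; rewrite e20 => e21; move/solve: e11 => e11.
move/solve: e02; rewrite e01 => e02; move/solve: e22; rewrite e21 e11 => e22.
have x_eq : (1 - (A i0 i0 - x)) / phi3 t = x.
  by rewrite -row e01 e02 /phi3; field.
rewrite /central_mx x_eq; apply/matrixP => i j.
case: (ord3P i) => ->; case: (ord3P j) => ->; rewrite !mxE /=;
  rewrite ?e01 ?e11 ?e12 ?e02 ?e20 ?e21 ?e22; try rewrite -/x; ring.
Qed.

Lemma full_twist :
  (sigma1 *m sigma2 *m sigma1) *m (sigma1 *m sigma2 *m sigma1) = central_mx (t ^+ 3).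
Proof. by have := phi3_neq0; rewrite /central_mx /phi3 => d0; mx3_entries; field. Qed.

Lemma central_mx_commute u B : t != 0 ->
  B *m ones3 = ones3 -> burau_v *m B = burau_v -> central_mx u *m B = B *m central_mx u.
Proof.
move=> t0 B1 vB; have R_B : rank1mx *m B = rank1mx.
  by rewrite rank1mxE // -scalemxAl -mulmxA vB.
have B_R : B *m rank1mx = rank1mx by rewrite rank1mxE // -scalemxAr mulmxA B1.
by rewrite mulmxDl mulmxDr mul_scalar_mx mul_mx_scalar -scalemxAl R_B -scalemxAr B_R.
Qed.

End BurauMatrices.

Lemma sigma1_J (F : fieldType) (t : F) : t != 0 ->
  sigma1 t^-1 *m burauJ t *m (sigma1 t)^T = burauJ t.
Proof. by move=> t0; mx3_entries; field. Qed.

Lemma sigma2_J (F : fieldType) (t : F) : t != 0 ->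
  sigma2 t^-1 *m burauJ t *m (sigma2 t)^T = burauJ t.
Proof. by move=> t0; mx3_entries; field. Qed.

Lemma map_sigma1 (F : fieldType) (f : {rmorphism F -> F}) (t : F) :
  map_mx f (sigma1 t) = sigma1 (f t).
Proof. by mx3_entries; rewrite ?rmorphB ?rmorph1 ?rmorph0. Qed.

Lemma map_sigma2 (F : fieldType) (f : {rmorphism F -> F}) (t : F) :
  map_mx f (sigma2 t) = sigma2 (f t).
Proof. by mx3_entries; rewrite ?rmorphB ?rmorph1 ?rmorph0. Qed.

(** * The involution t |-> t^-1 of Frac Z[t] *)

HB.instance Definition _ := GRing.RMorphism.copy tf (@FracField.tofrac _).
HB.instance Definition _ :=
  GRing.RMorphism.copy subst_inv (horner_eval T^-1 \o map_poly (intr : int -> K)).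

Lemma tf_eq0 p : (tf p == 0) = (p == 0). Proof. exact: tofrac_eq0. Qed.
Lemma tf_inj : injective tf. Proof. by move=> p q /eqP; rewrite tofrac_eq => /eqP. Qed.
Lemma tfC c : tf c%:P = c%:~R.
Proof. by rewrite -[c in c%:P]intz (rmorph_int (@polyC int)) rmorph_int. Qed.

Lemma T_neq0 : T != 0. Proof. by rewrite tf_eq0 polyX_eq0. Qed.

Lemma fracE (x : K) : x = tf \n_(repr x) / tf \d_(repr x).
Proof.
have d0 : \d_(repr x) != 0 := denom_ratioP _.
apply: (canRL (mulfK _)); first by rewrite tf_eq0.
have tf_pi p : tf p = (\pi_K (Ratio p 1))%qT by rewrite /tf piE.
rewrite !tf_pi -{1}[x]reprK -[_ * _]FracField.pi_mul; apply/eqmodP.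
rewrite /= equivfE /FracField.mulf !numden_Ratio ?mulr1 ?oner_neq0 ?mulf_neq0 //.
by rewrite mulrC.
Qed.

Lemma subst_invX : subst_inv 'X = T^-1.
Proof. by rewrite /subst_inv map_polyX hornerX. Qed.

Lemma subst_invC c : subst_inv c%:P = c%:~R.
Proof. by rewrite /subst_inv map_polyC hornerC. Qed.

Lemma subst_inv_reciprocal (q : {poly int}) :
  exists2 r : {poly int}, tf r = T ^+ (size q).-1 * subst_inv q & r`_0 = lead_coef q.
Proof.
elim/poly_ind: q => [|q c [r r_q r0]].
  by exists 0; rewrite ?lead_coef0 ?coef0 // (rmorph0 tf) (rmorph0 subst_inv) mulr0.
have [->|q0] := eqVneq q 0.
  exists c%:P; rewrite mul0r add0r ?size_polyC ?lead_coefC ?tfC ?subst_invC ?coefC //.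
  by case: (c != 0); rewrite expr0 mul1r.
have sq : (0 < size q)%N by rewrite size_poly_gt0.
exists (r + c%:P * 'X^(size q)).
  rewrite size_MXaddC (negbTE q0) /= rmorphD rmorphM /= tfC rmorphXn r_q.
  rewrite rmorphD rmorphM /= subst_invX subst_invC -/T -(prednK sq) /= exprS.
  by rewrite mulrDr (mulrC T) -mulrA [T * (_ / T)]mulrC divfK ?T_neq0 // [c%:~R * _]mulrC.
rewrite coefD coefCM coefXn (ltn_eqF sq) mulr0 addr0 r0.
by rewrite lead_coefDl ?lead_coefMX // size_polyC size_mulX //; case: (c != 0).
Qed.

Lemma subst_inv_eq0 (q : {poly int}) : (subst_inv q == 0) = (q == 0).
Proof.
apply/eqP/eqP => [|->]; last exact: rmorph0.
have [r r_q r0] := subst_inv_reciprocal q => q0.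
move: r_q; rewrite q0 mulr0 => /eqP; rewrite tf_eq0 => /eqP r_eq0.
by apply/eqP; rewrite -lead_coef_eq0 -r0 r_eq0 coef0.
Qed.

Lemma bar_frac p q : q != 0 -> bar (tf p / tf q) = subst_inv p / subst_inv q.
Proof.
move=> q0; set x := tf p / tf q.
have d0 : \d_(repr x) != 0 := denom_ratioP _.
have cross : \n_(repr x) * q = p * \d_(repr x).
  apply: tf_inj; move/eqP: (fracE x); rewrite !rmorphM /x eqr_div ?tf_eq0 //.
  by move/eqP.
by apply/eqP; rewrite /bar eqr_div ?subst_inv_eq0 // -!rmorphM cross.
Qed.

Lemma fracP (x : K) : exists p q, q != 0 /\ x = tf p / tf q.
Proof. by exists \n_(repr x), \d_(repr x); split; [exact: denom_ratioP | exact: fracE]. Qed.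

Lemma bar_is_zmod_morphism : zmod_morphism bar.
Proof.
move=> x y; have [a [b [b0 ->]]] := fracP x; have [c [d [d0 ->]]] := fracP y.
rewrite -mulNr -rmorphN addf_div ?tf_eq0 // -!rmorphM -rmorphD.
rewrite !bar_frac ?mulf_neq0 // -mulNr -rmorphN addf_div ?subst_inv_eq0 //.
by rewrite !rmorphD !rmorphM.
Qed.

Lemma bar_is_monoid_morphism : monoid_morphism bar.
Proof.
split=> [|x y].
  have one_frac : (1 : K) = tf 1 / tf 1 by rewrite rmorph1 divr1.
  by rewrite {1}one_frac bar_frac ?oner_neq0 // rmorph1 divr1.
have [a [b [b0 ->]]] := fracP x; have [c [d [d0 ->]]] := fracP y.
by rewrite mulf_div -!rmorphM !bar_frac ?mulf_neq0 // mulf_div !rmorphM.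
Qed.

HB.instance Definition _ := GRing.isZmodMorphism.Build K K bar bar_is_zmod_morphism.
HB.instance Definition _ := GRing.isMonoidMorphism.Build K K bar bar_is_monoid_morphism.

Lemma barT : bar T = T^-1.
Proof.
have T_frac : T = tf 'X / tf 1 by rewrite rmorph1 divr1.
by rewrite {1}T_frac bar_frac ?oner_neq0 // rmorph1 divr1 subst_invX.
Qed.

(** * Laurent polynomials and the formal Burau group *)

Lemma TXn_neq0 n : T ^+ n != 0. Proof. exact: expf_neq0 T_neq0. Qed.

Lemma laurent_tf p : laurent (tf p).
Proof. by exists p, 0%N; rewrite divr1. Qed.

Lemma laurent0 : laurent 0. Proof. by rewrite -(rmorph0 tf); apply: laurent_tf. Qed.
Lemma laurent1 : laurent 1. Proof. by rewrite -(rmorph1 tf); apply: laurent_tf. Qed.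
Lemma laurentT : laurent T. Proof. exact: laurent_tf. Qed.
Lemma laurentTV : laurent T^-1. Proof. by exists 1, 1%N; rewrite rmorph1 div1r. Qed.

Lemma laurentD x y : laurent x -> laurent y -> laurent (x + y).
Proof.
move=> [p [n ->]] [q [m ->]]; exists (p * 'X^m + q * 'X^n), (n + m)%N.
by rewrite addf_div ?TXn_neq0 // rmorphD !rmorphM !rmorphXn exprD.
Qed.

Lemma laurentN x : laurent x -> laurent (- x).
Proof. by move=> [p [n ->]]; exists (- p), n; rewrite rmorphN mulNr. Qed.

Lemma laurentB x y : laurent x -> laurent y -> laurent (x - y).
Proof. by move=> lx ly; apply/laurentD/laurentN. Qed.

Lemma laurentM x y : laurent x -> laurent y -> laurent (x * y).
Proof.
move=> [p [n ->]] [q [m ->]]; exists (p * q), (n + m)%N.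
by rewrite mulf_div rmorphM exprD.
Qed.

Definition laurent_mx (A : 'M[K]_3) := forall i j, laurent (A i j).

Lemma laurent_mx1 : laurent_mx 1%:M.
Proof. by move=> i j; rewrite mxE; case: (i == j); [apply: laurent1 | apply: laurent0]. Qed.

Lemma laurent_mxM A B : laurent_mx A -> laurent_mx B -> laurent_mx (A *m B).
Proof.
move=> lA lB i j; rewrite mxE; apply: (big_ind laurent laurent0 laurentD) => k _.
exact: laurentM.
Qed.

Ltac laurent_entries := let i := fresh "i" in let j := fresh "j" in move=> i j; rewrite mxE;
  case: (ord3P i) => ->; case: (ord3P j) => ->; rewrite /=;
  repeat first [ apply: laurentB | apply: laurent1 | apply: laurent0
               | apply: laurentT | apply: laurentTV ].

Definition preserves_J3 (A : 'M[K]_3) := barmx A *m J3 *m A^T = J3.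

Lemma preserves_J3_1 : preserves_J3 1%:M.
Proof. by rewrite /preserves_J3 /barmx map_mx1 trmx1 mul1mx mulmx1. Qed.

Lemma preserves_J3M A B : preserves_J3 A -> preserves_J3 B -> preserves_J3 (A *m B).
Proof.
rewrite /preserves_J3 /barmx => JA JB.
by rewrite map_mxM trmx_mul !mulmxA -(mulmxA _ _ J3) -(mulmxA _ _ B^T) JB.
Qed.

Lemma preserves_J3V A : A \in unitmx -> preserves_J3 A -> preserves_J3 (invmx A).
Proof.
rewrite /preserves_J3 /barmx => uA JA.
have ubA : map_mx bar A \in unitmx by rewrite map_unitmx.
rewrite map_invmx trmx_inv -{1}JA !mulmxA mulVmx // mul1mx -(mulmxA J3).
by rewrite mulmxV ?unitmx_tr // mulmx1.
Qed.

Lemma formal_burau1 : formal_burau 1%:M.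
Proof.
split; [split; [|split] | split; [|split]].
- exact: laurent_mx1.
- exact: unitmx1.
- by rewrite invmx1; apply: laurent_mx1.
- exact: mulmx1.
- exact: mul1mx.
- exact: preserves_J3_1.
Qed.

Lemma formal_burauM A B : formal_burau A -> formal_burau B -> formal_burau (A *m B).
Proof.
move=> [[lA [uA liA]] [vA [oA JA]]] [[lB [uB liB]] [vB [oB JB]]].
split; [split; [|split] | split; [|split]].
- exact: laurent_mxM lA lB.
- by rewrite unitmx_mul uA uB.
- by rewrite (invmxM uA uB); apply: laurent_mxM liB liA.
- by rewrite mulmxA vA vB.
- by rewrite -mulmxA oB oA.
- exact: preserves_J3M JA JB.
Qed.

Lemma formal_burauV A : formal_burau A -> formal_burau (invmx A).
Proof.
move=> [[lA [uA liA]] [vA [oA JA]]].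
split; [split; [|split] | split; [|split]].
- exact: liA.
- by rewrite unitmx_inv.
- by rewrite invmxK.
- by rewrite -{1}vA (mulmxK uA).
- by rewrite -{1}oA (mulKmx uA).
- exact: preserves_J3V uA JA.
Qed.

Lemma formal_burauX A n : formal_burau A -> formal_burau (A ^+ n).
Proof.
move=> fA; elim: n => [|n IHn]; first exact: formal_burau1.
by rewrite exprS; apply: formal_burauM.
Qed.

Lemma formal_burau_s1 : formal_burau s1.
Proof.
have s1V := mul_sigma1_inv T_neq0; have [us1 _] := mulmx1_unit s1V.
split; [split; [|split] | split; [|split]].
- by laurent_entries.
- exact: us1.
- by rewrite (mulmx1_invmx s1V); laurent_entries.
- exact: burau_v_sigma1.
- exact: sigma1_ones.
- have -> : barmx s1 = sigma1 T^-1 by rewrite /barmx map_sigma1 -barT.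
  exact: sigma1_J T_neq0.
Qed.

Lemma formal_burau_s2 : formal_burau s2.
Proof.
have s2V := mul_sigma2_inv T_neq0; have [us2 _] := mulmx1_unit s2V.
split; [split; [|split] | split; [|split]].
- by laurent_entries.
- exact: us2.
- by rewrite (mulmx1_invmx s2V); laurent_entries.
- exact: burau_v_sigma2.
- exact: sigma2_ones.
- have -> : barmx s2 = sigma2 T^-1 by rewrite /barmx map_sigma2 -barT.
  exact: sigma2_J T_neq0.
Qed.

(** * Units of Z[t, t^-1] *)

Lemma int_unit_sign (c : int) : c \is a GRing.unit -> exists s : bool, c = (-1) ^+ s.
Proof. by move=> /orP[/eqP->|/eqP->]; [exists false | exists true]. Qed.

Lemma poly_mul_eqXn (R : idomainType) (N : nat) (p q : {poly R}) :
  p * q = 'X^N -> exists2 c, c \is a GRing.unit & exists a, p = c *: 'X^a.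
Proof.
have splitX (r : {poly R}) : exists r1 c, r = r1 * 'X + c%:P.
  by elim/poly_ind: r => [|r c _]; [exists 0, 0; rewrite mul0r add0r | exists r, c].
have X0 : ('X : {poly R}) != 0 by rewrite polyX_eq0.
elim: N p q => [|N IHN] p q pq.
  have : p \is a GRing.unit by apply/unitrPr; exists q; rewrite pq expr0.
  rewrite poly_unitE => /andP[/eqP sp u0]; exists p`_0 => //; exists 0%N.
  by rewrite expr0 alg_polyC; apply: size1_polyC; rewrite sp.
have [p1 [c pE]] := splitX p; have [q1 [e qE]] := splitX q.
have : c * e = 0.
  by move: (congr1 (coefp 0) pq); rewrite /= coef0M pE qE !coefD !coefMX !coefC coefXn !add0r.
rewrite exprSr in pq; move/eqP; rewrite mulf_eq0 => /orP[/eqP ce0 | /eqP ce0].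
  move: pq; rewrite pE ce0 addr0 mulrAC => /(mulIf X0)/IHN[c' uc' [a ->]].
  by exists c' => //; exists a.+1; rewrite -scalerAl -exprSr.
by move: pq; rewrite qE ce0 addr0 mulrA => /(mulIf X0)/IHN.
Qed.

Lemma rmorph_phi3 (R S : nzRingType) (f : {rmorphism R -> S}) (x : R) :
  f (phi3 x) = phi3 (f x).
Proof. by rewrite /phi3 !rmorphD rmorph1 rmorphXn. Qed.

Lemma phi3T_neq0 : phi3 T != 0.
Proof.
rewrite -rmorph_phi3 tf_eq0; apply/eqP => /(congr1 (coefp 0)).
by rewrite /= !coefD coef1 coefX coefXn coef0.
Qed.

Lemma laurent_unit_monomial (b : K) : b != 0 -> laurent b -> laurent b^-1 ->
  exists (s : bool) (a m : nat), b = (-1) ^+ s * T ^+ a / T ^+ m.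
Proof.
move=> b0 [p [m bE]] [q [n bVE]].
have : p * q = 'X^(m + n).
  apply: tf_inj; rewrite rmorphM rmorphXn exprD /= -/T.
  rewrite -(divfK (TXn_neq0 m) (tf p)) -(divfK (TXn_neq0 n) (tf q)) -bE -bVE.
  by rewrite mulrACA (mulfV b0) mul1r.
move=> /poly_mul_eqXn[c /int_unit_sign[s ->] [a pE]].
by exists s, a, m; rewrite bE pE -mul_polyC !(rmorphM, rmorphXn, rmorphN, rmorph1) /=.
Qed.

Lemma prim3_two_F7 : 3.-primitive_root (2 : 'F_7).
Proof. by apply/andP; split => //; apply/forallP => -[[|[|[|]]] //= _]; rewrite unity_rootE. Qed.

Lemma two_pow_F7 (s : bool) (m a : nat) :
  (2 : 'F_7) ^+ m = (-1) ^+ s * 2 ^+ a -> s = false /\ (m = a %[mod 3])%N.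
Proof.
have cube1 k : ((2 : 'F_7) ^+ k) ^+ 3 = 1.
  by rewrite -exprM mulnC exprM (prim_expr_order prim3_two_F7) expr1n.
case: s => /= e.
  (* Cubing kills the powers of 2 but not the sign. *)
  by move: (congr1 (fun x => x ^+ 3) e); rewrite /= exprMn cube1 cube1 mulr1.
by split=> //; apply/eqP; rewrite -(eq_prim_root_expr prim3_two_F7) e mul1r.
Qed.

Definition eval2_F7 : {rmorphism {poly int} -> 'F_7} :=
  horner_eval (2 : 'F_7) \o map_poly (intr : int -> 'F_7).

Lemma eval2_F7X : eval2_F7 'X = 2.
Proof. by rewrite /= map_polyX /horner_eval hornerX. Qed.

Lemma phi3_two_F7 : phi3 (2 : 'F_7) = 0.
Proof. by apply/eqP. Qed.

Lemma phi3_dvd_1_sub_monomial (s : bool) (a m : nat) :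
  laurent ((1 - (-1) ^+ s * T ^+ a / T ^+ m) / phi3 T) ->
  s = false /\ (a = m %[mod 3])%N.
Proof.
move=> [r [l /esym rE]].
set b := _ / T ^+ m in rE; set x := _ / phi3 T in rE.
have xE : x * phi3 T = 1 - b by rewrite divfK ?phi3T_neq0.
have bE : b * T ^+ m = (-1) ^+ s * T ^+ a by rewrite divfK ?TXn_neq0.
have poly_eq : r * phi3 'X * 'X^m = ('X^m - (-1) ^+ s * 'X^a) * 'X^l.
  apply: tf_inj; rewrite !(rmorphM, rmorphB, rmorphXn, rmorphN, rmorph1) rmorph_phi3 /= -/T.
  rewrite -(divfK (TXn_neq0 l) (tf r)) rE [x * _ * _]mulrAC xE -bE.
  (* [ring] would reflect [T = tf 'X] through [tf] and compute in {poly int}. *)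
  by clearbody b; move: (T ^+ l) (T ^+ m) => u w; ring.
move/(congr1 eval2_F7): poly_eq; rewrite !(rmorphM, rmorphB, rmorphXn, rmorphN, rmorph1).
rewrite rmorph_phi3 eval2_F7X phi3_two_F7 mulr0 mul0r => /esym/eqP.
rewrite mulf_eq0 expf_eq0 /= andbF orbF subr_eq0 => /eqP /two_pow_F7 [-> /esym].
by split.
Qed.

Lemma laurent_central_unit (b : K) : b != 0 -> laurent b -> laurent b^-1 ->
  laurent ((1 - b) / phi3 T) -> exists k : int, b = (T ^+ 3) ^ k.
Proof.
move=> b0 lb lbV lx; have [s [a [m bE]]] := laurent_unit_monomial b0 lb lbV.
rewrite bE in lx; have [s0 am] := phi3_dvd_1_sub_monomial lx.
exists ((a%:Z - m%:Z) %/ 3)%Z.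
rewrite bE s0 mul1r -[T ^+ 3]/(T ^ 3%:Z) exprz_exp (_ : _ * _ = a%:Z + - m%:Z); last by lia.
by rewrite expfzDr ?T_neq0 // -exprnN.
Qed.

(** * The center *)

Lemma betaDelta_central : betaDelta = central_mx T (T ^+ 3).
Proof. exact: full_twist phi3T_neq0. Qed.

Lemma zpow_betaDelta (k : int) : zpow betaDelta k = central_mx T ((T ^+ 3) ^ k).
Proof.
rewrite betaDelta_central; case: k => n /=; first by rewrite (central_mxX phi3T_neq0).
by rewrite (central_mx_inv phi3T_neq0) ?TXn_neq0 // (central_mxX phi3T_neq0) exprVn.
Qed.

Lemma formal_burau_zpow k : formal_burau (zpow betaDelta k).
Proof.
have fD : formal_burau betaDelta.
  have fP := formal_burauM (formal_burauM formal_burau_s1 formal_burau_s2) formal_burau_s1.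
  exact: (formal_burauM fP fP).
by case: k => n /=; apply: formal_burauX; last apply: formal_burauV.
Qed.

Lemma zpow_betaDelta_commute k B : vv *m B = vv -> B *m one3 = one3 ->
  zpow betaDelta k *m B = B *m zpow betaDelta k.
Proof. by move=> vB B1; rewrite zpow_betaDelta; apply: central_mx_commute T_neq0 B1 vB. Qed.

Lemma laurent_sigma_centralizer A : GL3_laurent A -> A *m one3 = one3 ->
  A *m s1 = s1 *m A -> A *m s2 = s2 *m A -> exists k, A = zpow betaDelta k.
Proof.
move=> [lA [uA lAV]] A1 c1 c2.
have AE := sigma_centralizer phi3T_neq0 c1 c2 A1.
have AVE := sigma_centralizer phi3T_neq0 (invmx_comm uA c1) (invmx_comm uA c2)
  (esym (canRL (mulKmx uA) A1)).
move: AE AVE; set b := _ - _; set b' := _ - _ => AE AVE.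
(* [A^-1] is central as well, which makes [b] invertible with Laurent inverse [b']. *)
have bb' : b * b' = 1.
  apply: (central_mx_inj (t := T)).
  by rewrite central_mx1 -(central_mxM phi3T_neq0) -AE -AVE (mulmxV uA).
have b0 : b != 0 by apply: contra_eq_neq bb' => ->; rewrite mul0r eq_sym oner_eq0.
have [k bE] : exists k, b = (T ^+ 3) ^ k.
  apply: laurent_central_unit b0 _ _ _.
  - exact: laurentB (lA _ _) (lA _ _).
  - by rewrite (mulr1_eq bb'); apply: laurentB (lAV _ _) (lAV _ _).
  - by have [_ <-] := central_mx_coef T b; rewrite -AE.
by exists k; rewrite zpow_betaDelta -bE.
Qed.

Lemma burau_image_formal_burau A : burau_image A -> formal_burau A.
Proof.
elim=> {A} [|A _ fA|A _ fA|A _ fA|A _ fA]; first exact: formal_burau1.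
- exact: formal_burauM fA formal_burau_s1.
- exact: formal_burauM fA formal_burau_s2.
- exact: formal_burauM fA (formal_burauV formal_burau_s1).
- exact: formal_burauM fA (formal_burauV formal_burau_s2).
Qed.

Lemma burau_imageM A B : burau_image A -> burau_image B -> burau_image (A *m B).
Proof.
move=> iA; elim=> {B} [|B _ iAB|B _ iAB|B _ iAB|B _ iAB]; first by rewrite mulmx1.
- by rewrite mulmxA; apply: bi_s1.
- by rewrite mulmxA; apply: bi_s2.
- by rewrite mulmxA; apply: bi_s1i.
- by rewrite mulmxA; apply: bi_s2i.
Qed.

Lemma burau_image_s1 : burau_image s1.
Proof. by rewrite -[s1]mul1mx; apply/bi_s1/bi_one. Qed.
Lemma burau_image_s2 : burau_image s2.
Proof. by rewrite -[s2]mul1mx; apply/bi_s2/bi_one. Qed.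

Lemma burau_imageV A : burau_image A -> burau_image (invmx A).
Proof.
have [[_ [us1 _]] _] := formal_burau_s1; have [[_ [us2 _]] _] := formal_burau_s2.
have uV1 : invmx s1 \in unitmx by rewrite unitmx_inv us1.
have uV2 : invmx s2 \in unitmx by rewrite unitmx_inv us2.
have iV1 : burau_image (invmx s1) by rewrite -[invmx s1]mul1mx; apply/bi_s1i/bi_one.
have iV2 : burau_image (invmx s2) by rewrite -[invmx s2]mul1mx; apply/bi_s2i/bi_one.
elim=> {A} [|A iA iAV|A iA iAV|A iA iAV|A iA iAV]; first by rewrite invmx1; apply: bi_one.
all: have [[_ [uA _]] _] := burau_image_formal_burau iA.
- by rewrite (invmxM uA us1); apply: burau_imageM iV1 iAV.
- by rewrite (invmxM uA us2); apply: burau_imageM iV2 iAV.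
- by rewrite (invmxM uA uV1) invmxK; apply: burau_imageM burau_image_s1 iAV.
- by rewrite (invmxM uA uV2) invmxK; apply: burau_imageM burau_image_s2 iAV.
Qed.

Lemma burau_imageX A n : burau_image A -> burau_image (A ^+ n).
Proof.
move=> iA; elim: n => [|n IHn]; first exact: bi_one.
by rewrite exprS; apply: burau_imageM.
Qed.

Lemma burau_image_zpow k : burau_image (zpow betaDelta k).
Proof.
have iP := burau_imageM (burau_imageM burau_image_s1 burau_image_s2) burau_image_s1.
by case: k => n /=; apply: burau_imageX; last apply: burau_imageV; apply: burau_imageM.
Qed.

Theorem corollary3p13 :
  (forall A : 'M[K]_3,
     center_of formal_burau A <-> exists k : int, A = zpow betaDelta k) /\
  (forall A : 'M[K]_3,
     center_of formal_burau A <-> center_of burau_image A).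
Proof.
have center_fb A : center_of formal_burau A <-> exists k, A = zpow betaDelta k.
  split=> [[[gA [_ [A1 _]]] cA] | [k ->]].
    exact: laurent_sigma_centralizer gA A1 (cA _ formal_burau_s1) (cA _ formal_burau_s2).
  split=> [|B [_ [vB [B1 _]]]]; first exact: formal_burau_zpow.
  exact: zpow_betaDelta_commute.
split=> // A; rewrite center_fb; split=> [[k ->] | [iA cA]].
  split=> [|B /burau_image_formal_burau[_ [vB [B1 _]]]]; first exact: burau_image_zpow.
  exact: zpow_betaDelta_commute.
have [gA [_ [A1 _]]] := burau_image_formal_burau iA.
exact: laurent_sigma_centralizer gA A1 (cA _ burau_image_s1) (cA _ burau_image_s2).
Qed.
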